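(* Let $(\mathbb{Z}_{(p_n)},+\mathbf{1})$ and $(\mathbb{Z}_{(q_n)},+\mathbf{1})$ be torsion free odometers with scales $(p_n)$ and $(q_n)$ respectively. If $\operatorname{Aut}^{(\infty)}(\mathbb{Z}_{(p_n)},+\mathbf{1})$ and $\operatorname{Aut}^{(\infty)}(\mathbb{Z}_{(q_n)},+\mathbf{1})$ are isomorphic as groups, then $\mathbb{Z}_{(p_n)}$ and $\mathbb{Z}_{(q_n)}$ are isomorphic as groups.
   Context: A scale is a sequence $(p_n)$ of positive integers with $p_n\mid p_{n+1}$, not eventually constant; the odometer is $\mathbb{Z}_{(p_n)}=\{(x_n)\in\prod_n\mathbb{Z}/p_n\mathbb{Z}: x_{n+1}\equiv x_n\bmod p_n\}$, and $+\mathbf{1}$ is translation by $\mathbf{1}=(1,1,\dots)$. For a prime $p$, $\nu_p(n)$ is the $p$-adic valuation and $\mathbf{v}_p((p_n))=\lim_n\nu_p(p_n)\in\mathbb{N}\cup\{0,\infty\}$. The odometer (or scale) is torsion free if $\mathbf{v}_p((p_n))\in\{0,\infty\}$ for every prime $p$. For a homeomorphism $T$ of a compact metric space $X$, $\operatorname{Aut}(X,T)$ is the group of homeomorphisms commuting with $T$ and $\operatorname{Aut}^{(\infty)}(X,T)=\bigcup_{n\ge1}\operatorname{Aut}(X,T^n)\subseteq\operatorname{Homeo}(X)$. *)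

From mathcomp Require Import all_boot.
Set Implicit Arguments. Unset Strict Implicit. Unset Printing Implicit Defensive.

Definition is_scale (p : nat -> nat) : Prop :=
  (forall n, 0 < p n) /\ (forall n, p n %| p n.+1) /\
  ~ (exists N, forall n, N <= n -> p n = p N).

(* Torsion free: for every prime r, lim_n logn r (p n) (a nondecreasing
   sequence) is 0 or infinity. *)
Definition torsion_free (p : nat -> nat) : Prop :=
  forall r, prime r ->
    (forall n, logn r (p n) = 0) \/ (forall k, exists n, k <= logn r (p n)).

Record odo (p : nat -> nat) := Odo {
  odo_val :> nat -> nat;
  odo_lt : forall n, odo_val n < p n;
  odo_compat : forall n, odo_val n.+1 %% p n = odo_val n }.

Section OdoOps.
Variables (p : nat -> nat) (hp : is_scale p).

Lemma scale_pos n : 0 < p n. Proof. by case: hp. Qed.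
Lemma scale_dvd n : p n %| p n.+1. Proof. by case: hp => _ []. Qed.

Definition add_seq (x y : odo p) : nat -> nat := fun n => (x n + y n) %% p n.

Lemma add_seq_lt x y n : add_seq x y n < p n.
Proof. by rewrite /add_seq ltn_mod scale_pos. Qed.

Lemma add_seq_compat x y n : add_seq x y n.+1 %% p n = add_seq x y n.
Proof.
by rewrite /add_seq modn_dvdm ?scale_dvd // -modnDm !odo_compat.
Qed.

Definition odo_add (x y : odo p) : odo p :=
  Odo (@add_seq_lt x y) (@add_seq_compat x y).

Lemma one_lt n : 1 %% p n < p n. Proof. by rewrite ltn_mod scale_pos. Qed.
Lemma one_compat n : 1 %% p n.+1 %% p n = 1 %% p n.
Proof. by rewrite modn_dvdm ?scale_dvd. Qed.

Definition odo_one : odo p := Odo one_lt one_compat.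

Definition odo_T (x : odo p) : odo p := odo_add x odo_one.
End OdoOps.

(* Continuity for the product topology of the discrete spaces Z/p_n Z. *)
Definition odo_continuous (p q : nat -> nat) (f : odo p -> odo q) : Prop :=
  forall (x : odo p) (n : nat), exists m : nat,
    forall y : odo p, y m = x m -> f y n = f x n.

Definition odo_homeo (p : nat -> nat) (f : odo p -> odo p) : Prop :=
  exists g : odo p -> odo p,
    cancel f g /\ cancel g f /\ odo_continuous f /\ odo_continuous g.

(* membership in Aut^(oo)(Z_(p_n), +1) = union_{k>=1} Aut(Z_(p_n), T^k) *)
Definition aut_inf (p : nat -> nat) (hp : is_scale p) (f : odo p -> odo p) : Prop :=
  odo_homeo f /\
  exists k, 0 < k /\ forall x, f (iter k (odo_T hp) x) = iter k (odo_T hp) (f x).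

Definition aut_inf_isomorphic (p q : nat -> nat) (hp : is_scale p) (hq : is_scale q)
  : Prop :=
  exists phi : (odo p -> odo p) -> (odo q -> odo q),
    (forall f, aut_inf hp f -> aut_inf hq (phi f)) /\
    (forall f g, aut_inf hp f -> aut_inf hp g -> phi f = phi g -> f = g) /\
    (forall g, aut_inf hq g -> exists f, aut_inf hp f /\ phi f = g) /\
    (forall f g, aut_inf hp f -> aut_inf hp g -> phi (f \o g) = phi f \o phi g).

Definition odo_group_isomorphic (p q : nat -> nat) (hp : is_scale p) (hq : is_scale q)
  : Prop :=
  exists psi : odo p -> odo q,
    bijective psi /\
    forall x y, psi (odo_add hp x y) = odo_add hq (psi x) (psi y).

From mathcomp Require Import all_boot all_fingroup zify cyclic.
From Stdlib Require Import ProofIrrelevance FunctionalExtensionality.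
From Stdlib Require Import Classical ClassicalEpsilon.
Set Implicit Arguments. Unset Strict Implicit. Unset Printing Implicit Defensive.

(* Fix a prime r.  Call g in Aut^(oo) r-rootless if no power g^(r^a b) with
   r not dividing b is an r^(a+1)-th power in Aut^(oo); the existence of an
   r-rootless element is a group property, and it holds exactly when r
   divides some p_n.
   If r | p_n, then +1 is r-rootless: a root h of T^m, m = r^a b, commutes
   with T^m, hence permutes the finitely many cosets of mZ_(p_n); as their
   number is not divisible by r^(a+1), the map h^(r^a) fixes one of them and
   translates it by an element of mZ_(p_n), and comparing h^(r^(a+1)) with
   T^m at a level divisible by r^(a+1) yields r^(a+1) | m.
   If r divides no p_n, then r is a unit of Z_(p_n).  For g commuting with
   T^k, some power g^o, o = r^a b, fixes every coset of kZ_(p_n) and is a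
   translation on each of them; dividing these translations by r^(a+1) gives
   an r^(a+1)-th root of g^o.
   So isomorphic groups Aut^(oo) force the scales to have the same prime
   divisors; by torsion freeness every p_n then divides some q_m and
   conversely, and reducing coordinates gives inverse group isomorphisms. *)

Lemma iter_commute (T : Type) (f g : T -> T) :
  (forall x, f (g x) = g (f x)) -> forall n x, iter n f (g x) = g (iter n f x).
Proof. by move=> fg; elim=> [|n IHn] x //=; rewrite IHn fg. Qed.

Lemma nondecreasing_bounded_stable (f : nat -> nat) B :
  (forall n, f n <= f n.+1) -> (forall n, f n <= B) ->
  exists N, forall n, N <= n -> f n = f N.
Proof.
move=> f_step f_le; have f_mono := homo_leq leqnn (@leq_trans) f_step.
suff stable d N : B - f N <= d -> exists N, forall n, N <= n -> f n = f N.
  exact: (stable B 0 (leq_subr _ _)).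
elim: d N => [|d IHd] N le_d.
  by exists N => n /f_mono; have := f_le n; lia.
have [[n [le_Nn neq]]|stable] := classic (exists n, N <= n /\ f n <> f N).
  by apply: (IHd n); have := f_mono _ _ le_Nn; have := f_le n; lia.
exists N => n le_Nn; apply: NNPP => neq; apply: stable; by exists n.
Qed.

Lemma modn_addmul_gcd k P x y : 0 < k -> 0 < P -> x < P ->
  (exists j, y = x + k * j %[mod P]) <-> x = y %[mod gcdn k P].
Proof.
move=> k_gt0 P_gt0 lt_xP; set g := gcdn k P.
have gk : g %| k by rewrite dvdn_gcdl.
have gP : g %| P by rewrite dvdn_gcdr.
split=> [[j /(congr1 (modn^~ g))]|eq_xy].
  by rewrite !modn_dvdm // -modnDmr (eqP (dvdn_mulr j gk)) addn0 => ->.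
set d := y + (P - x).
have dx : d + x = y + P by rewrite /d; lia.
have gd : g %| d.
  have : d + x = 0 + x %[mod g].
    by rewrite dx add0n -modnDmr (eqP gP) addn0 eq_xy.
  by move/eqP; rewrite eqn_modDr mod0n.
case: (egcdnP P k_gt0) => u v kuE _.
have kj : k * (u * (d %/ g)) = d %[mod P].
  by rewrite mulnA (mulnC k) kuE mulnDl mulnAC -modnDml modnMl add0n mulnC divnK.
by exists (u * (d %/ g)); rewrite -modnDmr kj modnDmr addnC dx modnDr.
Qed.

Definition modinv R P := R ^ (totient P).-1.

Lemma modinvP R P : coprime R P -> 0 < P -> R * modinv R P = 1 %[mod P].
Proof. by move=> co P_gt0; rewrite -expnS prednK ?totient_gt0 ?Euler_exp_totient. Qed.

Lemma modinv_dvd R P P' : coprime R P' -> 0 < P -> 0 < P' -> P %| P' ->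
  modinv R P' = modinv R P %[mod P].
Proof.
move=> co P_gt0 P'_gt0 dvdP; have coP : coprime R P := coprime_dvdr dvdP co.
have inv' : R * modinv R P' = 1 %[mod P].
  by rewrite -(modn_dvdm _ dvdP) modinvP ?modn_dvdm.
rewrite -[modinv R P']muln1 -modnMmr -(modinvP coP P_gt0) modnMmr mulnA.
by rewrite (mulnC _ R) -modnMml inv' modnMml mul1n.
Qed.

Lemma iter_pfactor_fixpoint (S : finType) (f : S -> S) r a : prime r ->
  (forall x, iter (r ^ a.+1) f x = x) -> ~~ (r ^ a.+1 %| #|S|) ->
  exists x, iter (r ^ a) f x = x.
Proof.
move=> r_pr fR ndvd; have R_gt0 : 0 < r ^ a.+1 by rewrite expn_gt0 prime_gt0.
have f_inj : injective f.
  by move=> x y Exy; rewrite -(fR x) -(fR y) -(prednK R_gt0) !iterSr Exy.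
set s := perm f_inj; have sE j : iter j s =1 iter j f by apply: eq_iter => x; rewrite permE.
have sR : (s ^+ (r ^ a.+1)%N)%g = 1%g by apply/permP => x; rewrite permX perm1 sE fR.
apply: NNPP => no_fix; case/negP: ndvd.
have acts : [acts <[s]>%g, on [set: S] | 'P] by apply/actsP => g _ x; rewrite !inE.
rewrite -cardsT -(acts_sum_card_orbit acts); apply: dvdn_sum => _ /imsetP[x _ ->].
rewrite -porbitE.
have : #|porbit s x| %| r ^ a.+1.
  by rewrite porbitE (dvdn_trans (dvdn_orbit _ _ _)) // -orderE order_dvdn sR.
case/(dvdn_pfactor _ _ r_pr) => c; rewrite leq_eqVlt => /orP[/eqP -> -> // | lt_ca] E.
case: no_fix; exists x.
have -> : r ^ a = r ^ (a - c) * #|porbit s x| by rewrite E -expnD subnK.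
by rewrite -sE iterM iter_fix // iter_porbit.
Qed.

Section Odometer.
Variables (p : nat -> nat) (hp : is_scale p).
Local Notation T := (odo_T hp).

Lemma odo_ext (x y : odo p) : (forall n, x n = y n) -> x = y.
Proof.
case: x => xv xlt xc; case: y => yv ylt yc /= eq_xy.
have E : xv = yv by apply: functional_extensionality.
by subst yv; f_equal; apply: proof_irrelevance.
Qed.

Lemma scale_dvd_leq m n : m <= n -> p m %| p n.
Proof.
move=> /subnK <-; elim: (n - m) => [|d IHd] //.
by rewrite addSn (dvdn_trans IHd) // scale_dvd.
Qed.

Lemma odo_mod (x : odo p) n : x n %% p n = x n.
Proof. by rewrite modn_small // odo_lt. Qed.

Lemma odo_compat_leq (x : odo p) m n : m <= n -> x n %% p m = x m.
Proof.
move=> /subnK <-; elim: (n - m) => [|d IHd]; first by rewrite odo_mod.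
by rewrite addSn -IHd -(odo_compat x (d + m)) modn_dvdm // scale_dvd_leq ?leq_addl.
Qed.

Lemma odo_eq_mod (x : odo p) e m n : e %| p m -> e %| p n -> x m = x n %[mod e].
Proof.
wlog le_mn : m n / m <= n => [W em en|em en].
  by case: (leqP m n) => [|/ltnW] le; [apply: W | apply/esym/W].
by rewrite -(odo_compat_leq x le_mn) modn_dvdm.
Qed.

Lemma odo_of_seq_lt (f : nat -> nat) n : f n %% p n < p n.
Proof. by rewrite ltn_mod scale_pos. Qed.

Lemma odo_of_seq_compat (f : nat -> nat) (f_compat : forall n, f n.+1 = f n %[mod p n]) n :
  f n.+1 %% p n.+1 %% p n = f n %% p n.
Proof. by rewrite modn_dvdm ?scale_dvd // f_compat. Qed.

Definition odo_of_seq f f_compat : odo p :=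
  Odo (@odo_of_seq_lt f) (@odo_of_seq_compat f f_compat).

Definition odo_of_nat (i : nat) : odo p := @odo_of_seq (fun=> i) (fun=> erefl).

Lemma iter_odo_TE j (x : odo p) n : iter j T x n = (x n + j) %% p n.
Proof.
elim: j => [|j IHj] /=; first by rewrite addn0 odo_mod.
by rewrite /add_seq IHj /= modnDm !addnS addn0.
Qed.

Lemma odo_continuous_leq (f : odo p -> odo p) : odo_continuous f ->
  forall (x : odo p) n,
  exists m, forall m' (y : odo p), m <= m' -> y m' = x m' -> f y n = f x n.
Proof.
move=> f_cont x n; have [m Hm] := f_cont x n; exists m => m' y le_mm' eq_yx.
by apply: Hm; rewrite -(odo_compat_leq x le_mm') -(odo_compat_leq y le_mm') eq_yx.
Qed.

Lemma odo_continuous_comp (f g : odo p -> odo p) :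
  odo_continuous f -> odo_continuous g -> odo_continuous (f \o g).
Proof.
move=> f_cont g_cont x n; have [m1 H1] := f_cont (g x) n.
by have [m2 H2] := g_cont x m1; exists m2 => y /H2/H1.
Qed.

Lemma odo_continuous_iter (f : odo p -> odo p) j :
  odo_continuous f -> odo_continuous (iter j f).
Proof.
move=> f_cont; elim: j => [|j IHj] /=; first by move=> x n; exists n.
exact: odo_continuous_comp f_cont IHj.
Qed.

(* [x - y] lies in the closure kZ_(p_n) of kZ, whose image at level [n] is
   generated by [gcdn k (p n)]. *)
Definition odo_eqmod k (x y : odo p) := forall n, x n = y n %[mod gcdn k (p n)].

Lemma odo_eqmod_refl k x : odo_eqmod k x x. Proof. by []. Qed.

Lemma odo_eqmod_trans k x y z : odo_eqmod k x y -> odo_eqmod k y z -> odo_eqmod k x z.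
Proof. by move=> xy yz n; rewrite xy yz. Qed.

Lemma odo_eqmod_iterT k x : odo_eqmod k x (iter k T x).
Proof.
move=> n; rewrite iter_odo_TE modn_dvdm ?dvdn_gcdr //.
by rewrite -modnDmr (eqP (dvdn_gcdl k (p n))) addn0.
Qed.

(* [f x - x] at level [n]; adding [p n] avoids truncated subtraction. *)
Definition displacement (f : odo p -> odo p) (x : odo p) n := f x n + (p n - x n).

Lemma displacementE (f : odo p -> odo p) x n : f x n = (x n + displacement f x n) %% p n.
Proof.
have ltx := odo_lt x n.
by rewrite /displacement addnCA subnKC 1?ltnW // modnDr odo_mod.
Qed.

Lemma displacement_mod (f : odo p -> odo p) x n d :
  f x n = x n + d %[mod p n] <-> displacement f x n = d %[mod p n].
Proof.
rewrite [in X in X <-> _]displacementE modn_mod.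
by split=> /eqP; [rewrite eqn_modDl | rewrite -(eqn_modDl (x n))] => /eqP.
Qed.

Lemma displacement_compat (f : odo p -> odo p) x n :
  displacement f x n.+1 = displacement f x n %[mod p n].
Proof.
apply/esym/displacement_mod.
rewrite -(odo_compat (f x)) modn_mod (displacementE f x n.+1).
by rewrite modn_dvdm ?scale_dvd // -modnDml odo_compat.
Qed.

Lemma odo_eqmod_displacement k (f : odo p -> odo p) x :
  odo_eqmod k x (f x) <-> forall n, gcdn k (p n) %| displacement f x n.
Proof.
have mod_g n : f x n = x n + displacement f x n %[mod gcdn k (p n)].
  by rewrite [in LHS]displacementE modn_dvdm ?dvdn_gcdr.
split=> eq_x n; have := mod_g n.
  rewrite -eq_x -[in X in X = _ -> _](addn0 (x n)) => /eqP.
  by rewrite eqn_modDl mod0n eq_sym.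
by rewrite -[in X in _ = X -> _]modnDmr (eqP (eq_x n)) addn0 => ->.
Qed.

Lemma iter_displacement (C : odo p -> Prop) (f : odo p -> odo p) x :
  C x -> (forall y, C y -> C (f y)) ->
  (forall y n, C y -> displacement f y n = displacement f x n %[mod p n]) ->
  forall j n, iter j f x n = (x n + j * displacement f x n) %% p n.
Proof.
move=> Cx f_C f_disp j n; have C_iter i : C (iter i f x) by elim: i => //= i /f_C.
elim: j => [|j IHj]; first by rewrite addn0 odo_mod.
rewrite iterS displacementE -modnDmr f_disp // modnDmr IHj modnDml.
by rewrite mulSnr addnA.
Qed.

Section Commuting.
Variables (k : nat) (h : odo p -> odo p).
Hypotheses (k_gt0 : 0 < k) (h_cont : odo_continuous h)
  (h_comm : forall x, h (iter k T x) = iter k T (h x)).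

Lemma commute_iterT_mul j x : h (iter (k * j) T x) = iter (k * j) T (h x).
Proof. by rewrite mulnC !iterM (iter_commute (fun x => esym (h_comm x))). Qed.

Lemma displacement_eqmod x y n :
  odo_eqmod k x y -> displacement h y n = displacement h x n %[mod p n].
Proof.
move=> xy; have [M HM] := odo_continuous_leq h_cont y n.
have [le_MM' le_nM'] : M <= maxn M n /\ n <= maxn M n by rewrite leq_maxl leq_maxr.
have [j yE] : exists j, y (maxn M n) = x (maxn M n) + k * j %[mod p (maxn M n)].
  by apply/modn_addmul_gcd => //; [exact: scale_pos | exact: odo_lt].
have hyE : h y n = h (iter (k * j) T x) n.
  by apply/esym/(HM (maxn M n)) => //; rewrite iter_odo_TE -yE odo_mod.
have ynE : y n = x n + k * j %[mod p n].
  move/(congr1 (modn^~ (p n))): yE; rewrite !modn_dvdm ?scale_dvd_leq //.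
  by rewrite -modnDml !odo_compat_leq.
apply/displacement_mod; rewrite hyE commute_iterT_mul iter_odo_TE modn_mod.
by rewrite (displacementE h x n) modnDml -[in RHS]modnDml ynE modnDml addnAC.
Qed.

Lemma odo_eqmod_commute x y : odo_eqmod k x y -> odo_eqmod k (h x) (h y).
Proof.
move=> xy n; have g_p : gcdn k (p n) %| p n := dvdn_gcdr _ _.
have := displacement_eqmod n xy; move/(congr1 (modn^~ (gcdn k (p n)))).
rewrite !modn_dvdm // => Ed.
by rewrite (displacementE h x) (displacementE h y) !modn_dvdm // -modnDm (xy n) -Ed modnDm.
Qed.

Lemma iterT_root_dvd r x : odo_eqmod k x (h x) -> iter r h x = iter k T x ->
  forall N d, d %| p N -> d %| r * gcdn k (p N) -> d %| k.
Proof.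
move=> x_hx hrx N d d_p d_rg.
have hrxE : iter r h x N = (x N + r * displacement h x N) %% p N.
  apply: (@iter_displacement (odo_eqmod k x)) => // [y xy | y n xy].
    exact: odo_eqmod_trans x_hx (odo_eqmod_commute xy).
  exact: displacement_eqmod.
move: hrxE; rewrite hrx iter_odo_TE => /eqP; rewrite eqn_modDl => /eqP k_disp.
have d_disp : d %| r * displacement h x N.
  exact: dvdn_trans d_rg (dvdn_mul (dvdnn r) ((odo_eqmod_displacement _ _ _).1 x_hx N)).
by rewrite /dvdn -(modn_dvdm k d_p) k_disp modn_dvdm.
Qed.

End Commuting.

Lemma odo_eqmod_level k : 0 < k -> exists M0, forall x y,
  odo_eqmod k x y <-> x M0 = y M0 %[mod gcdn k (p M0)].
Proof.
move=> k_gt0; set g := fun n => gcdn k (p n).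
have g_dvd m n : m <= n -> g m %| g n.
  by move=> le_mn; rewrite dvdn_gcd dvdn_gcdl (dvdn_trans (dvdn_gcdr _ _)) ?scale_dvd_leq.
have [M0 g_stable] : exists M0, forall n, M0 <= n -> g n = g M0.
  apply: (@nondecreasing_bounded_stable g k) => n.
    by apply: dvdn_leq; [rewrite gcdn_gt0 k_gt0 | exact: g_dvd].
  exact: dvdn_leq (dvdn_gcdl _ _).
exists M0 => x y; split=> [xy|xy n]; first exact: xy.
have gn_gM0 : g n %| g M0.
  case: (leqP n M0) => [|/ltnW] le; first exact: g_dvd.
  by rewrite -(g_stable n le).
have gn_pM0 : g n %| p M0 := dvdn_trans gn_gM0 (dvdn_gcdr _ _).
rewrite (odo_eq_mod x (dvdn_gcdr _ _) gn_pM0) (odo_eq_mod y (dvdn_gcdr _ _) gn_pM0).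
by rewrite -(modn_dvdm (x M0) gn_gM0) -(modn_dvdm (y M0) gn_gM0) xy.
Qed.

Section Classes.
Variables (k M0 : nat).
Hypotheses (k_gt0 : 0 < k)
  (eqmod_M0 : forall x y, odo_eqmod k x y <-> x M0 = y M0 %[mod gcdn k (p M0)]).
Local Notation G := (gcdn k (p M0)).

Lemma classes_gt0 : 0 < G. Proof. by rewrite gcdn_gt0 k_gt0. Qed.

Definition odo_class (x : odo p) : 'I_G := Ordinal (ltn_pmod (x M0) classes_gt0).

Lemma odo_class_of_nat (i : 'I_G) : odo_class (odo_of_nat i) = i.
Proof. by apply: val_inj; rewrite /= modn_dvdm ?dvdn_gcdr // modn_small. Qed.

Lemma odo_class_eq x y : odo_class x = odo_class y <-> odo_eqmod k x y.
Proof. by rewrite eqmod_M0; split=> [/(congr1 val)|E]; last exact: val_inj. Qed.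

Definition class_map (h : odo p -> odo p) (i : 'I_G) : 'I_G := odo_class (h (odo_of_nat i)).

Variable (h : odo p -> odo p).
Hypotheses (h_cont : odo_continuous h)
  (h_comm : forall x, h (iter k T x) = iter k T (h x)).

Lemma odo_class_commute x : odo_class (h x) = class_map h (odo_class x).
Proof.
apply/odo_class_eq/(odo_eqmod_commute k_gt0 h_cont h_comm)/odo_class_eq.
by rewrite odo_class_of_nat.
Qed.

Lemma odo_class_iter j x : odo_class (iter j h x) = iter j (class_map h) (odo_class x).
Proof. by elim: j => //= j <-; rewrite odo_class_commute. Qed.

End Classes.

Lemma aut_inf_comp f g : aut_inf hp f -> aut_inf hp g -> aut_inf hp (f \o g).
Proof.
move=> [[f' [fK [f'K [f_cont f'_cont]]]] [k1 [k1_gt0 f_comm]]].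
move=> [[g' [gK [g'K [g_cont g'_cont]]]] [k2 [k2_gt0 g_comm]]].
split.
  exists (g' \o f'); split; first by move=> x /=; rewrite fK gK.
  split; first by move=> x /=; rewrite g'K f'K.
  by split; apply: odo_continuous_comp.
exists (k1 * k2); split; first by rewrite muln_gt0 k1_gt0.
move=> x /=; rewrite [k1 * k2]mulnC (commute_iterT_mul g_comm) mulnC.
by rewrite (commute_iterT_mul f_comm).
Qed.

Lemma aut_inf_iter f n : aut_inf hp f -> aut_inf hp (iter n.+1 f).
Proof. by move=> f_aut; elim: n => // n IHn; exact: aut_inf_comp f_aut IHn. Qed.

Lemma aut_inf_of_iter_homeo k R h : 0 < k -> 0 < R ->
  odo_continuous h -> (forall x, h (iter k T x) = iter k T (h x)) ->
  odo_homeo (iter R h) -> aut_inf hp h.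
Proof.
move=> k_gt0 R_gt0 h_cont h_comm [G' [GK [G'K [_ G'_cont]]]].
have hG x : h (iter R h x) = iter R h (h x) by rewrite -iterS iterSr.
have hG' x : h (G' x) = G' (h x) by rewrite -[h (G' x)]GK -hG G'K.
split; last by exists k.
exists (iter R.-1 h \o G'); split.
  by move=> x /=; rewrite -hG' -iterSr prednK.
split; first by move=> x /=; rewrite -iterS prednK.
by split=> //; apply: odo_continuous_comp (odo_continuous_iter _ h_cont) G'_cont.
Qed.

Section Root.
Variables (k R : nat) (G : odo p -> odo p).
Hypotheses (k_gt0 : 0 < k) (R_gt0 : 0 < R) (R_coprime : forall n, coprime R (p n))
  (G_homeo : odo_homeo G) (G_comm : forall x, G (iter k T x) = iter k T (G x))
  (G_eqmod : forall x, odo_eqmod k x (G x)).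

Let G_cont : odo_continuous G. Proof. by case: G_homeo => G' [_ [_ []]]. Qed.

Lemma root_seq_compat (x : odo p) n :
  x n.+1 + modinv R (p n.+1) * displacement G x n.+1
    = x n + modinv R (p n) * displacement G x n %[mod p n].
Proof.
rewrite -modnDm -modnMm displacement_compat.
rewrite (modinv_dvd (R_coprime _)) ?scale_pos ?scale_dvd //.
by rewrite modnMm odo_compat modnDmr.
Qed.

(* [x + R^-1 (G x - x)]; as [G x - x] only depends on the coset of [x], the
   [R]-th iterate of this map is [G]. *)
Definition root_map (x : odo p) : odo p := odo_of_seq (root_seq_compat x).

Lemma root_mapE x n :
  root_map x n = (x n + modinv R (p n) * displacement G x n) %% p n.
Proof. by []. Qed.

Lemma root_map_displacement x y n : odo_eqmod k x y ->
  displacement root_map y n = modinv R (p n) * displacement G x n %[mod p n].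
Proof.
move=> xy; apply/displacement_mod; rewrite root_mapE modn_mod -modnDmr -modnMmr.
by rewrite (displacement_eqmod k_gt0 G_cont G_comm _ xy) modnMmr modnDmr.
Qed.

Lemma odo_eqmod_root_map x : odo_eqmod k x (root_map x).
Proof.
apply/odo_eqmod_displacement => n; have g_p := dvdn_gcdr k (p n).
move: (root_map_displacement n (odo_eqmod_refl k x)).
move/(congr1 (modn^~ (gcdn k (p n)))); rewrite !modn_dvdm // => E.
by rewrite /dvdn E; apply: dvdn_mull; move/odo_eqmod_displacement: (G_eqmod x).
Qed.

Lemma iter_root_map j x n :
  iter j root_map x n = (x n + j * (modinv R (p n) * displacement G x n)) %% p n.
Proof.
have disp_x m := root_map_displacement m (odo_eqmod_refl k x).
rewrite (@iter_displacement (odo_eqmod k x)) //.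
- by rewrite -modnDmr -modnMmr disp_x modnMmr modnDmr.
- by move=> y xy; apply: odo_eqmod_trans xy (odo_eqmod_root_map y).
- by move=> y m xy; rewrite (root_map_displacement _ xy) disp_x.
Qed.

Lemma iter_root_map_R : iter R root_map = G.
Proof.
apply: functional_extensionality => x; apply: odo_ext => n.
rewrite iter_root_map -modnDmr mulnA -modnMml modinvP ?scale_pos //.
by rewrite modnMml mul1n modnDmr -displacementE.
Qed.

Lemma root_map_commute x : root_map (iter k T x) = iter k T (root_map x).
Proof.
apply: odo_ext => n; rewrite root_mapE !iter_odo_TE root_mapE modnDml.
rewrite -modnDmr -modnMmr (displacement_eqmod k_gt0 G_cont G_comm _ (odo_eqmod_iterT k x)).
by rewrite modnMmr modnDmr modnDml addnAC.
Qed.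

Lemma root_map_continuous : odo_continuous root_map.
Proof.
move=> x n; have [M HM] := odo_continuous_leq G_cont x n.
exists (maxn M n) => y yx; have le_nM : n <= maxn M n by rewrite leq_maxr.
have yxn : y n = x n by rewrite -(odo_compat_leq y le_nM) yx odo_compat_leq.
by rewrite !root_mapE /displacement yxn (HM _ _ (leq_maxl M n) yx).
Qed.

Lemma eqmod_preserving_root : exists h, aut_inf hp h /\ iter R h = G.
Proof.
exists root_map; split; last exact: iter_root_map_R.
apply: (aut_inf_of_iter_homeo k_gt0 R_gt0 root_map_continuous root_map_commute).
by rewrite iter_root_map_R.
Qed.

End Root.

Lemma pred_seq_compat (x : odo p) n : x n.+1 + (p n.+1).-1 = x n + (p n).-1 %[mod p n].
Proof.
apply/eqP; rewrite -(eqn_modDr 1) -!addnA !addn1 !prednK ?scale_pos // modnDr.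
by rewrite -modnDmr (eqP (scale_dvd hp n)) addn0 odo_compat odo_mod.
Qed.

Definition odo_pred (x : odo p) : odo p := odo_of_seq (pred_seq_compat x).

Lemma aut_inf_T : aut_inf hp T.
Proof.
have T1 x n : T x n = (x n + 1) %% p n by exact: (iter_odo_TE 1).
have predE x n : odo_pred x n = (x n + (p n).-1) %% p n by [].
have p_gt0 := scale_pos hp.
split; last by exists 1.
exists odo_pred; split.
  move=> x; apply: odo_ext => n; rewrite predE T1 modnDml -addnA add1n prednK //.
  by rewrite modnDr odo_mod.
split.
  move=> x; apply: odo_ext => n; rewrite T1 predE modnDml -addnA addn1 prednK //.
  by rewrite modnDr odo_mod.
by split=> x n; exists n => y yx; rewrite ?T1 ?predE yx.
Qed.

Lemma torsion_free_pfactor_dvd r n : torsion_free p -> prime r -> r %| p n ->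
  forall e, exists N, r ^ e %| p N.
Proof.
move=> tf r_pr r_dvd e; case: (tf r r_pr) => [logn0 | logn_unbounded].
  move: (logn0 n) => /eqP; rewrite -leqn0 leqNgt logn_gt0 mem_primes.
  by rewrite r_pr (scale_pos hp n) r_dvd.
have [N le_e] := logn_unbounded e; exists N; by rewrite pfactor_dvdn ?scale_pos.
Qed.

Definition has_rootless_powers r : Prop :=
  exists g, aut_inf hp g /\ forall h, aut_inf hp h -> forall a b, 0 < b -> ~~ (r %| b) ->
    iter (r ^ a.+1) h <> iter (r ^ a * b) g.

Lemma rootless_powers_of_dvd r n : prime r -> torsion_free p -> r %| p n ->
  has_rootless_powers r.
Proof.
move=> r_pr tf r_dvd; exists T; split; first exact: aut_inf_T.
move=> h [[_ [_ [_ [h_cont _]]]] _] a b b_gt0 r_b hRT.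
set R := r ^ a.+1 in hRT *; set m := r ^ a * b in hRT *.
have m_gt0 : 0 < m by rewrite muln_gt0 expn_gt0 prime_gt0.
have R_ndvd_m : ~~ (R %| m).
  by rewrite /R /m expnS (mulnC r) dvdn_pmul2l ?expn_gt0 ?prime_gt0.
have h_comm x : h (iter m T x) = iter m T (h x) by rewrite -hRT -iterSr.
have [M0 eqmod_M0] := odo_eqmod_level m_gt0.
have [i fix_i] : exists i, iter (r ^ a) (class_map (M0 := M0) m_gt0 h) i = i.
  apply: iter_pfactor_fixpoint => [//|i|]; last first.
    by rewrite card_ord; apply: contra R_ndvd_m => /dvdn_trans->; rewrite ?dvdn_gcdl.
  rewrite -{1}(odo_class_of_nat m_gt0 i) -(odo_class_iter m_gt0 eqmod_M0 h_cont h_comm) hRT.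
  rewrite -[in RHS](odo_class_of_nat m_gt0 i).
  exact/esym/(odo_class_eq m_gt0 eqmod_M0)/odo_eqmod_iterT.
have w_comm y : iter (r ^ a) h (iter m T y) = iter m T (iter (r ^ a) h y) :=
  iter_commute h_comm (r ^ a) y.
have [N RN] := torsion_free_pfactor_dvd tf r_pr r_dvd a.+1.
have w_cont := odo_continuous_iter (r ^ a) h_cont.
case/negP: R_ndvd_m.
apply: (@iterT_root_dvd _ _ m_gt0 w_cont w_comm r (odo_of_nat i) _ _ N R RN).
- apply/(odo_class_eq m_gt0 eqmod_M0).
  by rewrite (odo_class_iter m_gt0 eqmod_M0 h_cont h_comm) odo_class_of_nat fix_i.
- by rewrite -iterM -expnS hRT.
- rewrite /R expnS dvdn_pmul2l ?prime_gt0 // dvdn_gcd dvdn_mulr //.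
  by rewrite (dvdn_trans _ RN) // expnS dvdn_mull.
Qed.

Lemma no_rootless_powers r : prime r -> (forall n, ~~ (r %| p n)) ->
  ~ has_rootless_powers r.
Proof.
move=> r_pr r_ndvd [g [g_aut rootless]].
move: (g_aut) => [[g' [gK [g'K [g_cont g'_cont]]]] [k [k_gt0 g_comm]]].
have g'_comm x : g' (iter k T x) = iter k T (g' x) by rewrite -{1}(g'K x) -g_comm gK.
have [M0 eqmod_M0] := odo_eqmod_level k_gt0.
have class_g' := odo_class_commute k_gt0 eqmod_M0 g'_cont g'_comm.
pose pi := class_map (M0 := M0) k_gt0 g.
have pi_inj : injective pi.
  apply: (can_inj (g := class_map k_gt0 g')) => i.
  by rewrite /pi [class_map k_gt0 g i]/class_map -class_g' gK odo_class_of_nat.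
set o := #[perm pi_inj]%g.
have o_gt0 : 0 < o := order_gt0 _.
have pi_o i : iter o pi i = i.
  have := congr1 (fun s : {perm _} => s i) (expg_order (perm pi_inj)).
  by rewrite /= permX perm1 => {2}<-; apply: eq_iter => j; rewrite permE.
have go_eqmod x : odo_eqmod k x (iter o g x).
  apply/(odo_class_eq k_gt0 eqmod_M0).
  by rewrite (odo_class_iter k_gt0 eqmod_M0 g_cont g_comm) pi_o.
have [b r_b o_eq] := pfactor_coprime r_pr o_gt0.
have [h [h_aut hR]] : exists h, aut_inf hp h /\ iter (r ^ (logn r o).+1) h = iter o g.
  apply: (eqmod_preserving_root k_gt0 _ _ _ _ go_eqmod).
  - by rewrite expn_gt0 prime_gt0.
  - by move=> n; rewrite coprimeXl // prime_coprime.
  - by case: (aut_inf_iter o.-1 g_aut); rewrite prednK.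
  - by move=> x; exact: (iter_commute g_comm).
have b_gt0 : 0 < b by move: o_gt0; rewrite o_eq muln_gt0 => /andP[].
apply: (rootless h h_aut (logn r o) b b_gt0); first by rewrite -prime_coprime.
by rewrite hR mulnC -o_eq.
Qed.

End Odometer.

Section Isomorphism.
Variables (p q : nat -> nat) (hp : is_scale p) (hq : is_scale q).

Lemma aut_inf_isomorphic_sym : aut_inf_isomorphic hp hq -> aut_inf_isomorphic hq hp.
Proof.
move=> [phi [phi_aut [phi_inj [phi_surj phi_comp]]]].
pose preimage g f := aut_inf hp f /\ phi f = g.
pose preim g := epsilon (inhabits (fun x : odo p => x)) (preimage g).
have preimP g : aut_inf hq g -> aut_inf hp (preim g) /\ phi (preim g) = g.
  by move=> g_aut; apply: (@epsilon_spec _ _ (preimage g)); exact: phi_surj.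
exists preim; split; first by move=> g /preimP[].
split.
  move=> g1 g2 /preimP[_ E1] /preimP[_ E2] E.
  by rewrite -E1 -E2 E.
split.
  move=> f f_aut; exists (phi f); split; first exact: phi_aut.
  by have [pf_aut E] := preimP _ (phi_aut f f_aut); apply: phi_inj.
move=> g1 g2 g1_aut g2_aut; have [f1_aut E1] := preimP _ g1_aut.
have [f2_aut E2] := preimP _ g2_aut.
have [f_aut E] := preimP _ (aut_inf_comp g1_aut g2_aut).
by apply: phi_inj => //; [exact: aut_inf_comp | rewrite E phi_comp // E1 E2].
Qed.

Lemma aut_inf_morph_iter (phi : (odo p -> odo p) -> odo q -> odo q) :
  (forall f g, aut_inf hp f -> aut_inf hp g -> phi (f \o g) = phi f \o phi g) ->
  forall f n, aut_inf hp f -> phi (iter n.+1 f) = iter n.+1 (phi f).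
Proof.
move=> phi_comp f n f_aut; elim: n => // n IHn.
by rewrite -[iter n.+2 f]/(f \o iter n.+1 f) phi_comp ?IHn //; exact: aut_inf_iter.
Qed.

Lemma has_rootless_powers_iso r : prime r -> aut_inf_isomorphic hp hq ->
  has_rootless_powers hp r -> has_rootless_powers hq r.
Proof.
move=> r_pr [phi [phi_aut [phi_inj [phi_surj phi_comp]]]] [g [g_aut rootless]].
have phi_iter := aut_inf_morph_iter phi_comp.
exists (phi g); split; first exact: phi_aut.
move=> _ /phi_surj[h [h_aut <-]] a b b_gt0 r_b.
have R_gt0 : 0 < r ^ a.+1 by rewrite expn_gt0 prime_gt0.
have m_gt0 : 0 < r ^ a * b by rewrite muln_gt0 expn_gt0 prime_gt0.
move=> E; apply: (rootless h h_aut a b b_gt0 r_b); move: E.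
rewrite -(prednK R_gt0) -(prednK m_gt0) -!phi_iter //.
by apply: phi_inj; exact: aut_inf_iter.
Qed.

Lemma prime_dvd_scale_iso r n : prime r -> torsion_free p ->
  aut_inf_isomorphic hp hq -> r %| p n -> exists m, r %| q m.
Proof.
move=> r_pr tf iso r_dvd; apply: NNPP => r_ndvd.
have rootless_p := rootless_powers_of_dvd hp r_pr tf r_dvd.
have rootless_q := has_rootless_powers_iso r_pr iso rootless_p.
apply: (no_rootless_powers r_pr _ rootless_q) => m.
by apply/negP => r_dvd_q; apply: r_ndvd; exists m.
Qed.

Lemma scale_common_multiple (d : nat -> nat) (s : seq nat) :
  (forall r, r \in s -> exists m, d r %| q m) -> exists m, forall r, r \in s -> d r %| q m.
Proof.
elim: s => [|r s IHs] dvd_s; first by exists 0.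
have [m1 dvd_r] := dvd_s r (mem_head r s).
have [m2 dvd_rest] : exists m, forall r', r' \in s -> d r' %| q m.
  by apply: IHs => r' r's; apply: dvd_s; rewrite inE r's orbT.
exists (maxn m1 m2) => r'; rewrite inE => /predU1P[->|/dvd_rest dvd_m2].
  exact: dvdn_trans dvd_r (scale_dvd_leq hq (leq_maxl _ _)).
exact: dvdn_trans dvd_m2 (scale_dvd_leq hq (leq_maxr _ _)).
Qed.

Lemma scale_dvd_of_primes : torsion_free q ->
  (forall r n, prime r -> r %| p n -> exists m, r %| q m) ->
  forall n, exists m, p n %| q m.
Proof.
move=> tf primes_pq n.
have [m dvd_parts] : exists m, forall r, r \in primes (p n) -> r ^ logn r (p n) %| q m.
  apply: scale_common_multiple => r; rewrite mem_primes => /and3P[r_pr _ r_dvd].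
  have [m r_dvd_q] := primes_pq r n r_pr r_dvd.
  exact: (torsion_free_pfactor_dvd hq tf r_pr r_dvd_q _).
exists m; apply/dvdn_partP => [|r r_in]; first exact: scale_pos.
by rewrite p_part; apply: dvd_parts.
Qed.

End Isomorphism.

Section ScaleRestriction.
Variables (p q : nat -> nat) (hp : is_scale p) (hq : is_scale q).
Variables (f : nat -> nat) (q_dvd_p : forall m, q m %| p (f m)).

Lemma restrict_compat (x : odo p) m : x (f m.+1) = x (f m) %[mod q m].
Proof. by apply: odo_eq_mod => //; apply: dvdn_trans (scale_dvd hq m) _. Qed.

Definition odo_restrict (x : odo p) : odo q := odo_of_seq hq (restrict_compat x).

Lemma odo_restrictE x m : odo_restrict x m = x (f m) %% q m. Proof. by []. Qed.

Lemma odo_restrict_add x y :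
  odo_restrict (odo_add hp x y) = odo_add hq (odo_restrict x) (odo_restrict y).
Proof.
apply: odo_ext => m; rewrite odo_restrictE /= /add_seq !odo_restrictE.
by rewrite modn_dvdm // modnDm.
Qed.

End ScaleRestriction.

Lemma odo_restrictK (p q : nat -> nat) (hp : is_scale p) (hq : is_scale q) f g
    (q_dvd_p : forall m, q m %| p (f m)) (p_dvd_q : forall n, p n %| q (g n)) :
  cancel (odo_restrict hp hq q_dvd_p) (odo_restrict hq hp p_dvd_q).
Proof.
move=> x; apply: odo_ext => n; rewrite !odo_restrictE modn_dvdm //.
rewrite (@odo_eq_mod _ hp x (p n) (f (g n)) n) ?odo_mod //.
exact: dvdn_trans (p_dvd_q n) (q_dvd_p (g n)).
Qed.

Lemma odo_group_isomorphic_of_dvd (p q : nat -> nat) (hp : is_scale p) (hq : is_scale q) :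
  (forall n, exists m, p n %| q m) -> (forall m, exists n, q m %| p n) ->
  odo_group_isomorphic hp hq.
Proof.
move=> dvd_pq dvd_qp.
have p_dvd_q n : p n %| q (xchoose (dvd_pq n)) := xchooseP (dvd_pq n).
have q_dvd_p m : q m %| p (xchoose (dvd_qp m)) := xchooseP (dvd_qp m).
exists (odo_restrict hp hq q_dvd_p); split; last exact: odo_restrict_add.
by exists (odo_restrict hq hp p_dvd_q); apply: odo_restrictK.
Qed.

Theorem theorem1p4 (p q : nat -> nat) (hp : is_scale p) (hq : is_scale q) :
  torsion_free p -> torsion_free q ->
  aut_inf_isomorphic hp hq -> odo_group_isomorphic hp hq.
Proof.
move=> tfp tfq iso; apply: odo_group_isomorphic_of_dvd.
  apply: (scale_dvd_of_primes hp hq tfq) => r n r_pr.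
  exact: prime_dvd_scale_iso r_pr tfp iso.
apply: (scale_dvd_of_primes hq hp tfp) => r m r_pr.
exact: prime_dvd_scale_iso r_pr tfq (aut_inf_isomorphic_sym iso).
Qed.
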